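(* Let $G$ be a finitely generated torsion-free nilpotent group. Then $G$ has a nontrivial abelian direct factor if and only if the image of the center $Z(G)$ in the abelianization $G/[G,G]$ contains a primitive element.
   Context: An element of a finitely generated abelian group $A$ is primitive if its image in the free abelian group $A/\mathrm{Tor}(A)$ is part of a basis of $A/\mathrm{Tor}(A)$, where $\mathrm{Tor}(A)$ is the torsion subgroup. *)

From Stdlib Require Import ZArith List.
Import ListNotations.
Set Implicit Arguments.

Record Group := {
  carrier :> Type;
  gmul : carrier -> carrier -> carrier;
  ginv : carrier -> carrier;
  gone : carrier;
  gmulA : forall x y z, gmul x (gmul y z) = gmul (gmul x y) z;
  gmul1 : forall x, gmul gone x = x;
  gmulV : forall x, gmul (ginv x) x = gone
}.

Section Defs.
Variable G : Group.

Definition npow (g : G) (n : nat) : G := Nat.iter n (fun y => gmul G y g) (gone G).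
Definition zpow (g : G) (z : Z) : G :=
  match z with
  | Z0 => gone G
  | Zpos p => npow g (Pos.to_nat p)
  | Zneg p => ginv G (npow g (Pos.to_nat p))
  end.

Definition comm (x y : G) : G := gmul G (gmul G (ginv G x) (ginv G y)) (gmul G x y).

Inductive gen (S : G -> Prop) : G -> Prop :=
| gen_in : forall x, S x -> gen S x
| gen_one : gen S (gone G)
| gen_mul : forall x y, gen S x -> gen S y -> gen S (gmul G x y)
| gen_inv : forall x, gen S x -> gen S (ginv G x).

Definition finitely_generated : Prop :=
  exists l : list G, forall g : G, gen (fun x => In x l) g.

Definition torsion_free : Prop :=
  forall (g : G) (n : nat), (0 < n)%nat -> npow g n = gone G -> g = gone G.

Fixpoint gamma (i : nat) : G -> Prop :=
  match i with
  | O => fun _ => True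
  | S j => gen (fun c => exists x y, gamma j x /\ c = comm x y)
  end.

Definition nilpotent : Prop :=
  exists c : nat, forall g, gamma c g -> g = gone G.

Definition center (z : G) : Prop := forall g, gmul G z g = gmul G g z.
Definition derived (g : G) : Prop := gamma 1 g.

Definition subgroup (H : G -> Prop) : Prop :=
  H (gone G) /\ (forall x y, H x -> H y -> H (gmul G x y)) /\
  (forall x, H x -> H (ginv G x)).
Definition normal (H : G -> Prop) : Prop :=
  subgroup H /\ forall x g, H x -> H (gmul G (gmul G (ginv G g) x) g).

Definition has_nontrivial_abelian_direct_factor : Prop :=
  exists H K : G -> Prop,
    normal H /\ normal K /\
    (forall x, H x -> K x -> x = gone G) /\
    (forall g, exists h k, H h /\ K k /\ g = gmul G h k) /\
    (forall x y, H x -> H y -> gmul G x y = gmul G y x) /\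
    (exists h, H h /\ h <> gone G).

(** In the abelianization A = G/[G,G]: the class of g is torsion in A. *)
Definition ab_torsion (g : G) : Prop :=
  exists n : nat, (0 < n)%nat /\ derived (npow g n).

Fixpoint lincomb (bs : list G) (ns : list Z) : G :=
  match bs, ns with
  | b :: bs', n :: ns' => gmul G (zpow b n) (lincomb bs' ns')
  | _, _ => gone G
  end.

(** The classes of bs in A/Tor(A) (A = G/[G,G]) form a basis of the free
    abelian group A/Tor(A): they span and are linearly independent. *)
Definition basis_mod_torsion (bs : list G) : Prop :=
  (forall x : G, exists ns : list Z, length ns = length bs /\
       ab_torsion (gmul G (ginv G x) (lincomb bs ns))) /\
  (forall ns : list Z, length ns = length bs ->
       ab_torsion (lincomb bs ns) -> Forall (fun n => n = 0%Z) ns).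

(** The class of g in A = G/[G,G] is primitive: its image in A/Tor(A) is
    part of a basis of A/Tor(A). *)
Definition ab_primitive (g : G) : Prop :=
  exists bs : list G, basis_mod_torsion (g :: bs).

End Defs.

(** If G = H x K with H abelian and nontrivial, then H is central and [G,G] lies in K;
    since G is torsion-free, H also meets the preimage T of the torsion of G/[G,G] trivially.
    The Euclidean algorithm, run on the components of a finite generating set, yields bases
    of H and of K modulo T, and their concatenation is a basis of G/T whose first vector is a
    central element. Conversely, if z is central and z, b_1, ..., b_r is a basis modulo T,
    then G is the internal direct product of the infinite cyclic group <z> and the preimage
    of the span of b_1, ..., b_r. *)

From Stdlib Require Import ZArith List Lia Permutation Classical Setoid Morphisms.
Import ListNotations.
Set Implicit Arguments.

Section GroupTheory.
Variable G : Group.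
Local Infix "**" := (gmul G) (at level 40, left associativity).
Local Notation e := (gone G).
Local Notation iv := (ginv G).

Lemma mulgA x y z : x ** (y ** z) = x ** y ** z. Proof. apply gmulA. Qed.
Lemma mul1g x : e ** x = x. Proof. apply gmul1. Qed.
Lemma mulVg x : iv x ** x = e. Proof. apply gmulV. Qed.

Lemma mulgV x : x ** iv x = e.
Proof.
  rewrite <- (mul1g (x ** iv x)), <- (mulVg (iv x)) at 1.
  rewrite <- mulgA, (mulgA (iv x) x), mulVg, mul1g. apply mulVg.
Qed.
Lemma mulg1 x : x ** e = x.
Proof. rewrite <- (mulVg x), mulgA, mulgV, mul1g. reflexivity. Qed.

Lemma mulKg a b : iv a ** (a ** b) = b. Proof. rewrite mulgA, mulVg, mul1g. reflexivity. Qed.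
Lemma mulKVg a b : a ** (iv a ** b) = b. Proof. rewrite mulgA, mulgV, mul1g. reflexivity. Qed.
Lemma mulgK a b : a ** b ** iv b = a. Proof. rewrite <- mulgA, mulgV, mulg1. reflexivity. Qed.
Lemma mulgKV a b : a ** iv b ** b = a. Proof. rewrite <- mulgA, mulVg, mulg1. reflexivity. Qed.

Lemma mulgI a b c : a ** b = a ** c -> b = c.
Proof. intro E. rewrite <- (mulKg a b), E, mulKg. reflexivity. Qed.

Lemma invg_unique a b : a ** b = e -> b = iv a.
Proof. intro E. apply (mulgI a). rewrite E, mulgV. reflexivity. Qed.
Lemma invgK a : iv (iv a) = a.
Proof. symmetry. apply invg_unique, mulVg. Qed.
Lemma invMg a b : iv (a ** b) = iv b ** iv a.
Proof.
  symmetry. apply invg_unique.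
  rewrite <- mulgA, (mulgA b), mulgV, mul1g, mulgV. reflexivity.
Qed.
Lemma invg1 : iv e = e.
Proof. symmetry. apply invg_unique, mul1g. Qed.

Lemma comm_trivial x y : comm G x y = e -> x ** y = y ** x.
Proof.
  unfold comm. intro E. apply invg_unique in E. rewrite E, invMg, !invgK. reflexivity.
Qed.

Lemma center1 : center G e.
Proof. intro w. rewrite mul1g, mulg1. reflexivity. Qed.
Lemma centerV c : center G c -> center G (iv c).
Proof.
  intros Hc w. apply (mulgI c). rewrite mulgA, mulgV, mul1g, Hc, <- mulgA, mulVg, mulg1.
  reflexivity.
Qed.
Lemma centerM a b : center G a -> center G b -> center G (a ** b).
Proof. intros Ha Hb w. rewrite <- mulgA, Hb, mulgA, Ha, mulgA. reflexivity. Qed.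

Lemma comm_centerMl c x y : center G c -> comm G (c ** x) y = comm G x y.
Proof.
  intro Hc. unfold comm.
  replace (iv (c ** x) ** iv y) with (iv x ** iv y ** iv c)
    by (rewrite invMg, <- !mulgA, (centerV Hc (iv y)); reflexivity).
  replace (c ** x ** y) with (c ** (x ** y)) by apply mulgA.
  rewrite <- mulgA, mulKg. reflexivity.
Qed.
Lemma comm_centerMr c x y : center G c -> comm G x (c ** y) = comm G x y.
Proof.
  intro Hc. unfold comm. rewrite invMg, (mulgA x c y), <- (Hc x), <- (mulgA c).
  rewrite (mulgA (iv x)), <- (mulgA _ (iv c)), mulKg. reflexivity.
Qed.

Lemma gen_sub (P Q : G -> Prop) x :
  (forall y, P y -> gen G Q y) -> gen G P x -> gen G Q x.
Proof. intros HPQ Hx. induction Hx; auto using gen_one, gen_mul, gen_inv. Qed.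
Lemma gen_mono (P Q : G -> Prop) x : (forall y, P y -> Q y) -> gen G P x -> gen G Q x.
Proof. intro HPQ. apply gen_sub. auto using gen_in. Qed.
Lemma gen_subgroup (P Q : G -> Prop) x :
  subgroup G P -> (forall y, Q y -> P y) -> gen G Q x -> P x.
Proof. intros (P1 & PM & PV) HQP. induction 1; auto. Qed.
Lemma gen_list_subgroup (P : G -> Prop) l :
  subgroup G P -> Forall P l -> forall x, gen G (fun y => In y l) x -> P x.
Proof. rewrite Forall_forall. intros HP Hl x. apply gen_subgroup; assumption. Qed.

Lemma npowS g n : npow G g (S n) = npow G g n ** g. Proof. reflexivity. Qed.
Lemma npow1 g : npow G g 1 = g. Proof. apply mul1g. Qed.
Lemma npowD g m n : npow G g (m + n) = npow G g m ** npow G g n.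
Proof.
  induction n.
  - rewrite Nat.add_0_r, mulg1. reflexivity.
  - rewrite Nat.add_succ_r, !npowS, IHn, mulgA. reflexivity.
Qed.
Lemma npow_commute g n : npow G g n ** g = g ** npow G g n.
Proof. rewrite <- npowS, <- Nat.add_1_l, npowD, npow1. reflexivity. Qed.
Lemma npowM g m n : npow G g (m * n) = npow G (npow G g m) n.
Proof.
  induction n.
  - rewrite Nat.mul_0_r. reflexivity.
  - rewrite npowS, <- IHn, <- npowD. f_equal. lia.
Qed.
Lemma npowV g n : npow G (iv g) n = iv (npow G g n).
Proof.
  induction n.
  - symmetry. apply invg1.
  - rewrite !npowS, IHn, <- invMg, npow_commute. reflexivity.
Qed.
Lemma npow_closed (P : G -> Prop) x n :
  P e -> (forall a b, P a -> P b -> P (a ** b)) -> P x -> P (npow G x n).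
Proof. intros P1 PM Px. induction n; [exact P1 | rewrite npowS; auto]. Qed.

Lemma zpow_succ g z : zpow G g (z + 1) = zpow G g z ** g.
Proof.
  destruct z as [|p|p].
  - simpl. rewrite mul1g. reflexivity.
  - simpl. rewrite Pos2Nat.inj_add, Nat.add_1_r. reflexivity.
  - destruct (Pos.eq_dec p 1) as [->|Hp].
    + simpl. rewrite mul1g, mulVg. reflexivity.
    + replace (Z.neg p + 1)%Z with (Z.neg (p - 1)) by lia. simpl.
      replace (Pos.to_nat p) with (S (Pos.to_nat (p - 1))) by lia.
      rewrite npowS, npow_commute, invMg, mulgKV. reflexivity.
Qed.
Lemma zpow_pred g z : zpow G g (z - 1) = zpow G g z ** iv g.
Proof. rewrite <- (Z.sub_add 1 z) at 2. rewrite zpow_succ, mulgK. reflexivity. Qed.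
Lemma zpow1 g : zpow G g 1 = g. Proof. apply mul1g. Qed.
Lemma zpowD g a b : zpow G g (a + b) = zpow G g a ** zpow G g b.
Proof.
  induction b using Z.peano_ind.
  - rewrite Z.add_0_r, mulg1. reflexivity.
  - rewrite <- Z.add_1_r, Z.add_assoc, !zpow_succ, IHb, mulgA. reflexivity.
  - rewrite <- Z.sub_1_r, Z.add_sub_assoc, !zpow_pred, IHb, mulgA. reflexivity.
Qed.
Lemma zpowN g a : zpow G g (- a) = iv (zpow G g a).
Proof. apply invg_unique. rewrite <- zpowD, Z.add_opp_diag_r. reflexivity. Qed.
Lemma zpowM g a b : zpow G (zpow G g a) b = zpow G g (a * b).
Proof.
  induction b using Z.peano_ind.
  - rewrite Z.mul_0_r. reflexivity.
  - rewrite <- Z.add_1_r, zpow_succ, IHb, Z.mul_add_distr_l, Z.mul_1_r, zpowD. reflexivity.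
  - rewrite <- Z.sub_1_r, zpow_pred, IHb, Z.mul_sub_distr_l, Z.mul_1_r, <- Z.add_opp_r.
    rewrite zpowD, zpowN. reflexivity.
Qed.
Lemma zpow_closed (P : G -> Prop) x a :
  P e -> (forall a b, P a -> P b -> P (a ** b)) -> (forall a, P a -> P (iv a)) ->
  P x -> P (zpow G x a).
Proof.
  intros P1 PM PV Px. destruct a; simpl; [exact P1 | | apply PV]; apply npow_closed; assumption.
Qed.

(** * Congruence modulo a subgroup with abelian quotient *)

Record abelian_quotient (N : G -> Prop) : Prop := {
  aq_one : N e;
  aq_mul : forall {x y}, N x -> N y -> N (x ** y);
  aq_inv : forall {x}, N x -> N (iv x);
  aq_comm : forall x y, N (comm G x y)
}.

Definition isolated (N : G -> Prop) : Prop :=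
  forall x n, (0 < n)%nat -> N (npow G x n) -> N x.

Section ModuloAbelianQuotient.
Variable N : G -> Prop.
Hypothesis HN : abelian_quotient N.

Definition eqmod x y := N (iv x ** y).

Lemma memN_conj x g : N x -> N (iv g ** x ** g).
Proof.
  intro Hx. replace (iv g ** x ** g) with (x ** comm G x g).
  - apply (aq_mul HN); [exact Hx | apply (aq_comm HN)].
  - unfold comm. rewrite (mulgA x), (mulgA x), mulgV, mul1g, !mulgA. reflexivity.
Qed.

#[local] Instance eqmod_Equivalence : Equivalence eqmod.
Proof.
  split; unfold eqmod.
  - intro x. rewrite mulVg. apply (aq_one HN).
  - intros x y Hxy. apply (aq_inv HN) in Hxy. rewrite invMg, invgK in Hxy. exact Hxy.
  - intros x y z Hxy Hyz. pose proof (aq_mul HN Hxy Hyz) as Hxz.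
    rewrite <- mulgA, mulKVg in Hxz. exact Hxz.
Qed.

#[local] Instance gmul_Proper : Proper (eqmod ==> eqmod ==> eqmod) (gmul G).
Proof.
  intros x x' Hx y y' Hy. unfold eqmod in *.
  replace (iv (x ** y) ** (x' ** y')) with (iv y ** (iv x ** x') ** y ** (iv y ** y')).
  - apply (aq_mul HN); auto. apply memN_conj; auto.
  - rewrite invMg, <- !mulgA, mulKVg, !mulgA. reflexivity.
Qed.

#[local] Instance ginv_Proper : Proper (eqmod ==> eqmod) iv.
Proof.
  intros x x' Hx. unfold eqmod in *. rewrite invgK.
  replace (x ** iv x') with (iv (iv x) ** iv (iv x ** x') ** iv x).
  - apply memN_conj, (aq_inv HN), Hx.
  - rewrite invMg, !invgK, <- !mulgA, mulgV, mulg1. reflexivity.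
Qed.

Lemma eqmodC x y : eqmod (x ** y) (y ** x).
Proof. unfold eqmod. rewrite invMg. apply (aq_comm HN). Qed.

Lemma eqmod1 x : N x <-> eqmod x e.
Proof.
  unfold eqmod. rewrite mulg1. split; intro Hx; [apply (aq_inv HN), Hx|].
  rewrite <- invgK. apply (aq_inv HN), Hx.
Qed.

Lemma memN_eqmod x y : eqmod x y -> N x -> N y.
Proof. intros Exy Hx. apply eqmod1. apply eqmod1 in Hx. rewrite <- Exy. exact Hx. Qed.

Lemma eqmodACA a b c d : eqmod (a ** b ** (c ** d)) (a ** c ** (b ** d)).
Proof. rewrite <- !mulgA, (mulgA b c d), (eqmodC b c), <- (mulgA c b d). reflexivity. Qed.

Lemma npow_mul_eqmod x y n : eqmod (npow G (x ** y) n) (npow G x n ** npow G y n).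
Proof.
  induction n.
  - simpl. rewrite mul1g. reflexivity.
  - rewrite !npowS, IHn. apply eqmodACA.
Qed.

Lemma zpow_mul_eqmod x y a : eqmod (zpow G (x ** y) a) (zpow G x a ** zpow G y a).
Proof.
  induction a using Z.peano_ind.
  - simpl. rewrite mul1g. reflexivity.
  - rewrite <- Z.add_1_r, !zpow_succ, IHa. apply eqmodACA.
  - rewrite <- Z.sub_1_r, !zpow_pred, IHa, invMg, (eqmodC (iv y) (iv x)). apply eqmodACA.
Qed.

Definition zadd (ns ms : list Z) := map (fun p => (fst p + snd p)%Z) (combine ns ms).

Lemma lincomb_add gs ns ms : length ns = length gs -> length ms = length gs ->
  eqmod (lincomb G gs (zadd ns ms)) (lincomb G gs ns ** lincomb G gs ms).
Proof.
  revert ns ms.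
  induction gs as [|g gs IH]; intros [|n ns] [|m ms] Hn Hm; try discriminate; simpl.
  - rewrite mul1g. reflexivity.
  - unfold zadd in IH. rewrite zpowD, IH by (simpl in *; lia). apply eqmodACA.
Qed.

Lemma lincomb_opp gs ns : eqmod (lincomb G gs (map Z.opp ns)) (iv (lincomb G gs ns)).
Proof.
  revert ns. induction gs as [|g gs IH]; intros [|n ns]; simpl;
    try (rewrite invg1; reflexivity).
  rewrite zpowN, IH, invMg, eqmodC. reflexivity.
Qed.

Lemma lincomb_zeros gs : lincomb G gs (repeat 0%Z (length gs)) = e.
Proof. induction gs; simpl; [|rewrite IHgs, mul1g]; reflexivity. Qed.

Lemma lincomb_app a b n m : length n = length a ->
  lincomb G (a ++ b) (n ++ m) = lincomb G a n ** lincomb G b m.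
Proof.
  revert n. induction a; intros [|x n] Hn; try discriminate; simpl.
  - rewrite mul1g. reflexivity.
  - rewrite IHa by (simpl in Hn; lia). apply mulgA.
Qed.

Definition span (gs : list G) := gen G (fun y => In y gs \/ N y).

Lemma span_zpow gs x a : span gs x -> span gs (zpow G x a).
Proof. unfold span. intro Hx. apply zpow_closed; auto using gen_one, gen_mul, gen_inv. Qed.

Lemma span_self gs : Forall (span gs) gs.
Proof. apply Forall_forall. intros. apply gen_in. auto. Qed.

Lemma memN_span gs x : N x -> span gs x.
Proof. intro. apply gen_in. auto. Qed.

Lemma span_trans A B x : Forall (span B) A -> span A x -> span B x.
Proof.
  rewrite Forall_forall. intros HA Hx. eapply gen_sub; [|exact Hx].
  intros y [Hy|Hy]; [apply HA, Hy | apply memN_span, Hy].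
Qed.

Lemma span_incl A B x : incl A B -> span A x -> span B x.
Proof. intro HAB. apply gen_mono. intros y [Hy|Hy]; auto. Qed.

Lemma span_eqmod gs x y : eqmod x y -> span gs x -> span gs y.
Proof.
  intros Exy Hx. rewrite <- (mulKVg x y). apply gen_mul; [exact Hx | apply memN_span, Exy].
Qed.

Lemma span_nil x : span [] x -> N x.
Proof.
  induction 1 as [x [[]|Hx]| |x y _ Hx _ Hy|x _ Hx];
    [exact Hx | apply (aq_one HN) | apply (aq_mul HN Hx Hy) | apply (aq_inv HN Hx)].
Qed.

Lemma span_normal gs : normal G (span gs).
Proof.
  split; [split; [|split]|].
  - apply gen_one.
  - apply gen_mul.
  - apply gen_inv.
  - intros x g Hx. apply (span_eqmod (x := x)); auto.
    unfold eqmod. replace (iv x ** (iv g ** x ** g)) with (comm G x g); [apply (aq_comm HN)|].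
    unfold comm. rewrite !mulgA. reflexivity.
Qed.

Lemma lincomb_span gs ns : span gs (lincomb G gs ns).
Proof.
  revert ns. induction gs as [|g gs IH]; intros [|n ns]; simpl; try apply gen_one.
  apply gen_mul.
  - apply span_zpow, gen_in. simpl. auto.
  - apply (span_incl (A := gs)), IH. apply incl_tl, incl_refl.
Qed.

Lemma span_lincomb gs x : span gs x ->
  exists ns, length ns = length gs /\ eqmod x (lincomb G gs ns).
Proof.
  induction 1 as [x [Hin|Hx]| |x y _ [n [Hn Ex]] _ [m [Hm Ey]]|x _ [n [Hn Ex]]].
  - clear -HN Hin. induction gs as [|g gs IH]; [destruct Hin|].
    destruct Hin as [->|Hin].
    + exists (1%Z :: repeat 0%Z (length gs)). simpl.
      rewrite repeat_length, lincomb_zeros, mulg1, mul1g. split; reflexivity.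
    + destruct (IH Hin) as [ns [Hn E]]. exists (0%Z :: ns). simpl.
      rewrite mul1g. split; [now rewrite Hn | exact E].
  - exists (repeat 0%Z (length gs)). rewrite repeat_length, lincomb_zeros.
    split; [reflexivity | exact (proj1 (eqmod1 x) Hx)].
  - exists (repeat 0%Z (length gs)). rewrite repeat_length, lincomb_zeros. split; reflexivity.
  - exists (zadd n m). split.
    + unfold zadd. rewrite length_map, length_combine. lia.
    + rewrite lincomb_add, Ex, Ey by assumption. reflexivity.
  - exists (map Z.opp n). rewrite length_map, lincomb_opp, Ex. split; auto. reflexivity.
Qed.

Definition indep bs := forall ns, length ns = length bs ->
  N (lincomb G bs ns) -> Forall (fun n => n = 0%Z) ns.

(** * Bases modulo an isolated subgroup *)

Section IsolatedQuotient.
Hypothesis N_isolated : isolated N.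
Variable S : G -> Prop.
Hypothesis HS : subgroup G S.

Lemma subgroup_zpow x a : S x -> S (zpow G x a).
Proof. destruct HS as (S1 & SM & SV). apply zpow_closed; assumption. Qed.

Lemma memN_zpow x a : a <> 0%Z -> N (zpow G x a) -> N x.
Proof.
  intros Ha Hxa. destruct a as [|p|p]; simpl in Hxa; [contradiction| |].
  - eapply N_isolated; [apply (Pos2Nat.is_pos p) | exact Hxa].
  - eapply N_isolated; [apply (Pos2Nat.is_pos p)|].
    rewrite <- invgK. exact (aq_inv HN Hxa).
Qed.

Definition zpow_prod (ps : list (G * Z)) :=
  fold_right (fun p acc => zpow G (fst p) (snd p) ** acc) e ps.

Definition weight (ps : list (G * Z)) :=
  fold_right (fun p acc => Z.abs_nat (snd p) + acc)%nat 0%nat ps.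

Lemma lincomb_zpow_prod gs ns : lincomb G gs ns = zpow_prod (combine gs ns).
Proof. revert ns. induction gs; intros [|n ns]; simpl; auto. rewrite IHgs. reflexivity. Qed.

Lemma lc_perm ps qs : Permutation ps qs -> eqmod (zpow_prod ps) (zpow_prod qs).
Proof.
  induction 1; simpl.
  - reflexivity.
  - rewrite IHPermutation. reflexivity.
  - rewrite !mulgA, (eqmodC (zpow G (fst y) (snd y))). reflexivity.
  - etransitivity; eassumption.
Qed.

Lemma weight_perm ps qs : Permutation ps qs -> weight ps = weight qs.
Proof. induction 1; simpl; lia. Qed.

Lemma zpow_prod_zeros ps : Forall (fun p : G * Z => snd p = 0%Z) ps -> zpow_prod ps = e.
Proof.
  induction 1 as [|[x n] ps Hn _ IH]; simpl in *; [reflexivity|].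
  rewrite IH, Hn, mul1g. reflexivity.
Qed.

Definition nontrivial_relation (ps : list (G * Z)) :=
  Forall (fun p => S (fst p)) ps /\ N (zpow_prod ps) /\ Exists (fun p => snd p <> 0%Z) ps.

Definition spanned_by_fewer (ps : list (G * Z)) :=
  exists gs, length gs = pred (length ps) /\ Forall S gs /\
    Forall (fun p => span gs (fst p)) ps.

Lemma nontrivial_relation_perm ps qs :
  Permutation ps qs -> nontrivial_relation ps -> nontrivial_relation qs.
Proof.
  intros Hp (HSp & HNp & Hnz). split; [|split].
  - exact (Permutation_Forall Hp HSp).
  - exact (memN_eqmod (lc_perm Hp) HNp).
  - exact (Permutation_Exists Hp Hnz).
Qed.

Lemma spanned_by_fewer_perm ps qs :
  Permutation ps qs -> spanned_by_fewer qs -> spanned_by_fewer ps.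
Proof.
  intros Hp (gs & Hlen & HSgs & Hspan). exists gs. split; [|split]; auto.
  - rewrite Hlen, (Permutation_length Hp). reflexivity.
  - exact (Permutation_Forall (Permutation_sym Hp) Hspan).
Qed.

Lemma Exists_Permutation_cons {A} (P : A -> Prop) l :
  Exists P l -> exists x r, P x /\ Permutation l (x :: r).
Proof.
  rewrite Exists_exists. intros (x & Hin & Hx).
  destruct (in_split _ _ Hin) as (l1 & l2 & ->).
  exists x, (l1 ++ l2). split; [exact Hx | apply Permutation_sym, Permutation_middle].
Qed.

(* One step of the Euclidean algorithm: with [c] the sign of [a/b], the relation
   [g^a h^b r] becomes [g^(a - c b) (h g^c)^b r] modulo [N]. *)
Lemma euclid_step g a h b r :
  a <> 0%Z -> b <> 0%Z -> (Z.abs b <= Z.abs a)%Z ->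
  nontrivial_relation ((g, a) :: (h, b) :: r) ->
  (forall qs, (weight qs < weight ((g, a) :: (h, b) :: r))%nat ->
     nontrivial_relation qs -> spanned_by_fewer qs) ->
  spanned_by_fewer ((g, a) :: (h, b) :: r).
Proof.
  intros Ha Hb Hab (HSp & HNp & _) IH.
  pose (c := (Z.sgn a * Z.sgn b)%Z).
  pose (qs := (g, (a - c * b)%Z) :: (h ** zpow G g c, b) :: r).
  inversion HSp as [|? ? Sg HS1]; subst. inversion HS1 as [|? ? Sh HSr]; subst.
  simpl in Sg, Sh.
  assert (Hq : nontrivial_relation qs).
  { split; [|split].
    - destruct HS as (_ & SM & _).
      constructor; [exact Sg|]. constructor; [|exact HSr].
      apply SM; [exact Sh | apply subgroup_zpow, Sg].
    - apply (memN_eqmod (x := zpow_prod ((g, a) :: (h, b) :: r))); [|exact HNp].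
      unfold qs. simpl.
      rewrite (zpow_mul_eqmod h (zpow G g c) b), zpowM.
      replace a with ((a - c * b) + c * b)%Z at 1 by lia.
      rewrite zpowD, <- !mulgA. apply gmul_Proper; [reflexivity|].
      rewrite !mulgA, (eqmodC (zpow G g (c * b))). reflexivity.
    - constructor 2. constructor 1. simpl. exact Hb. }
  assert (Hlt : (weight qs < weight ((g, a) :: (h, b) :: r))%nat).
  { unfold qs, c. simpl. lia. }
  destruct (IH qs Hlt Hq) as (gs & Hlen & HSgs & Hspan).
  exists gs. split; [|split]; auto.
  inversion Hspan as [|? ? Fg HF1]; subst. inversion HF1 as [|? ? Fh HFr]; subst.
  simpl in Fg, Fh. constructor; [exact Fg|]. constructor; [simpl|exact HFr].
  rewrite <- (mulgK h (zpow G g c)).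
  apply gen_mul; [exact Fh | apply gen_inv, span_zpow, Fg].
Qed.

Lemma nontrivial_relation_reduce ps : nontrivial_relation ps -> spanned_by_fewer ps.
Proof.
  remember (weight ps) as w eqn:Hw. revert ps Hw.
  induction w as [w IH] using lt_wf_ind. intros ps Hw Hrel.
  destruct (Exists_Permutation_cons (proj2 (proj2 Hrel))) as ([g a] & rest & Ha & Hp).
  simpl in Ha. apply (spanned_by_fewer_perm Hp).
  pose proof (nontrivial_relation_perm Hp Hrel) as Hrel1.
  destruct (Forall_Exists_dec (fun p : G * Z => snd p = 0%Z)
              (fun p => Z.eq_dec (snd p) 0) rest) as [Hz|Hnz].
  - (* the relation reads [g^a = 1] modulo [N], so [g] itself lies in [N] *)
    destruct Hrel1 as (HSp & HNp & _). simpl in HNp. rewrite (zpow_prod_zeros Hz), mulg1 in HNp.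
    exists (map fst rest). split; [|split].
    + rewrite length_map. reflexivity.
    + inversion HSp; subst. apply Forall_map. assumption.
    + constructor; [apply memN_span, (memN_zpow g Ha HNp)|].
      apply Forall_forall. intros p Hin. apply gen_in. left. apply in_map, Hin.
  - destruct (Exists_Permutation_cons Hnz) as ([h b] & rest' & Hb & Hr). simpl in Hb.
    assert (Hp2 : Permutation ((g, a) :: rest) ((g, a) :: (h, b) :: rest'))
      by (constructor; exact Hr).
    apply (spanned_by_fewer_perm Hp2).
    pose proof (nontrivial_relation_perm Hp2 Hrel1) as Hrel2.
    assert (IH' : forall qs, (weight qs < weight ((g, a) :: (h, b) :: rest'))%nat ->
                    nontrivial_relation qs -> spanned_by_fewer qs).
    { intros qs Hlt. apply (IH (weight qs)); [|reflexivity].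
      rewrite Hw, (weight_perm Hp), (weight_perm Hp2). exact Hlt. }
    destruct (Z.le_gt_cases (Z.abs b) (Z.abs a)).
    + apply euclid_step; auto.
    + assert (Hsw : Permutation ((g, a) :: (h, b) :: rest') ((h, b) :: (g, a) :: rest'))
        by constructor.
      apply (spanned_by_fewer_perm Hsw), euclid_step; auto; [lia | |].
      * exact (nontrivial_relation_perm Hsw Hrel2).
      * intros qs Hlt. apply IH'. rewrite (weight_perm Hsw). exact Hlt.
Qed.

Lemma combine_Exists_nonzero gs ns : length ns = length gs ->
  ~ Forall (fun n => n = 0%Z) ns -> Exists (fun p : G * Z => snd p <> 0%Z) (combine gs ns).
Proof.
  revert ns. induction gs; intros [|n ns] Hl Hf; simpl in *; try discriminate.
  - exfalso. apply Hf. constructor.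
  - destruct (Z.eq_dec n 0) as [->|Hn].
    + constructor 2. apply IHgs; [lia|]. intro. apply Hf. constructor; auto.
    + constructor 1. exact Hn.
Qed.

Lemma combine_Forall_fst (P : G -> Prop) gs ns : length ns = length gs ->
  Forall (fun p : G * Z => P (fst p)) (combine gs ns) <-> Forall P gs.
Proof.
  revert ns. induction gs; intros [|n ns] Hl; simpl in *; try discriminate.
  - split; constructor.
  - rewrite !Forall_cons_iff, IHgs by lia. reflexivity.
Qed.

(* The basis theorem for finitely generated subgroups of the torsion-free abelian group G/N. *)
Lemma exists_indep_spanning gs :
  Forall S gs -> exists bs, Forall S bs /\ Forall (span bs) gs /\ indep bs.
Proof.
  remember (length gs) as n eqn:Hn. revert gs Hn.
  induction n as [n IH] using lt_wf_ind. intros gs Hn HSgs.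
  destruct (classic (indep gs)) as [Hi|Hi].
  { exists gs. auto using span_self. }
  apply not_all_ex_not in Hi as [ns Hns].
  apply imply_to_and in Hns as [Hlen Hns]. apply imply_to_and in Hns as [HNns Hnz].
  assert (Hrel : nontrivial_relation (combine gs ns)).
  { split; [|split].
    - apply combine_Forall_fst; assumption.
    - rewrite <- lincomb_zpow_prod. exact HNns.
    - apply combine_Exists_nonzero; assumption. }
  destruct (nontrivial_relation_reduce Hrel) as (gs' & Hlen' & HSgs' & Hspan).
  rewrite length_combine, Hlen, Nat.min_id in Hlen'.
  assert (Hpos : (0 < n)%nat).
  { destruct gs; [|simpl in Hn; lia]. destruct ns; [|discriminate]. now contradict Hnz. }
  destruct (IH (pred n) ltac:(lia) gs' ltac:(lia) HSgs') as (bs & HSbs & Hspan' & Hind).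
  exists bs. split; [|split]; auto.
  apply combine_Forall_fst in Hspan; [|exact Hlen].
  rewrite Forall_forall in Hspan |- *. intros x Hx. apply (span_trans Hspan'), Hspan, Hx.
Qed.

End IsolatedQuotient.
End ModuloAbelianQuotient.

(** * Direct factors and primitive central elements *)

Lemma lincomb_subgroup (P : G -> Prop) gs ns :
  subgroup G P -> Forall P gs -> P (lincomb G gs ns).
Proof.
  intros (P1 & PM & PV) Hgs. revert ns.
  induction Hgs as [|g gs Hg _ IH]; intros [|n ns]; simpl; auto.
  apply PM; [apply zpow_closed|]; auto.
Qed.

Lemma center_zpow c a : center G c -> center G (zpow G c a).
Proof. apply zpow_closed; auto using center1, centerM, centerV. Qed.

Lemma abelian_quotient_derived : abelian_quotient (derived G).
Proof.
  split; [apply gen_one | apply gen_mul | apply gen_inv |].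
  intros x y. apply gen_in. exists x, y. split; [exact I | reflexivity].
Qed.

#[local] Instance eqmod_derived_Equivalence : Equivalence (eqmod (derived G)) :=
  eqmod_Equivalence abelian_quotient_derived.

Local Notation T := (ab_torsion G).

Lemma abelian_quotient_torsion : abelian_quotient T.
Proof.
  pose proof abelian_quotient_derived as HD. pose proof HD as [D1 DM DV DC]. split.
  - exists 1%nat. rewrite npow1. split; [lia | exact D1].
  - intros x y (n & Hn & Hx) (m & Hm & Hy). exists (n * m)%nat. split; [lia|].
    apply (memN_eqmod HD (npow G x (n * m) ** npow G y (n * m))).
    + symmetry. apply (npow_mul_eqmod HD).
    + rewrite npowM, (Nat.mul_comm n), (npowM y).
      apply DM; apply npow_closed; assumption.
  - intros x (n & Hn & Hx). exists n. rewrite npowV. split; [exact Hn | apply DV, Hx].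
  - intros x y. exists 1%nat. rewrite npow1. split; [lia | apply DC].
Qed.

Lemma isolated_torsion : isolated T.
Proof.
  intros x n Hn (m & Hm & Hx). exists (n * m)%nat. rewrite npowM. split; [lia | exact Hx].
Qed.

#[local] Instance eqmod_torsion_Equivalence : Equivalence (eqmod T) :=
  eqmod_Equivalence abelian_quotient_torsion.
#[local] Instance gmul_torsion_Proper : Proper (eqmod T ==> eqmod T ==> eqmod T) (gmul G) :=
  gmul_Proper abelian_quotient_torsion.

Lemma basis_mod_torsionE bs :
  basis_mod_torsion G bs <-> (forall x, span T bs x) /\ indep T bs.
Proof.
  pose proof abelian_quotient_torsion as HT. split; intros [Hspan Hind]; split; auto.
  - intro x. destruct (Hspan x) as (ns & _ & Hx).
    apply (span_eqmod (x := lincomb G bs ns)); [symmetry; exact Hx | apply lincomb_span].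
  - intro x. destruct (span_lincomb HT (Hspan x)) as (ns & Hlen & Hx). exists ns. auto.
Qed.

Definition zpowers (z x : G) : Prop := exists a, x = zpow G z a.

Lemma zpowers_normal z : center G z -> normal G (zpowers z).
Proof.
  intro Hz. split; [split; [|split]|].
  - exists 0%Z. reflexivity.
  - intros x y [a ->] [b ->]. exists (a + b)%Z. apply eq_sym, zpowD.
  - intros x [a ->]. exists (- a)%Z. apply eq_sym, zpowN.
  - intros x g [a ->]. exists a. rewrite <- mulgA, (center_zpow a Hz g), mulKg. reflexivity.
Qed.

Lemma primitive_center_direct_factor z :
  center G z -> ab_primitive G z -> has_nontrivial_abelian_direct_factor G.
Proof.
  intros Hz [bs Hbasis]. apply basis_mod_torsionE in Hbasis as [Hspan Hind].
  pose proof abelian_quotient_torsion as HT.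
  exists (zpowers z), (span T bs).
  split; [apply zpowers_normal, Hz|]. split; [apply span_normal, HT|]. split; [|split; [|split]].
  - intros x [a ->] Hx.
    destruct (span_lincomb HT Hx) as (ms & Hlen & E).
    assert (Hrel : T (lincomb G (z :: bs) ((- a)%Z :: ms))).
    { simpl. apply eqmod1; [exact HT|]. rewrite <- E, zpowN, mulVg. reflexivity. }
    apply Hind in Hrel; [|simpl; lia]. inversion Hrel as [|? ? Ha]; subst.
    replace a with 0%Z by lia. reflexivity.
  - intro g. destruct (span_lincomb HT (Hspan g)) as ([|a ms] & Hlen & E); [discriminate|].
    exists (zpow G z a), (iv (zpow G z a) ** g). split; [|split].
    + exists a. reflexivity.
    + apply (span_eqmod (x := lincomb G bs ms)); [|apply lincomb_span].
      simpl in E. rewrite E, mulKg. reflexivity.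
    + rewrite mulKVg. reflexivity.
  - intros x y [a ->] [b ->]. apply center_zpow, Hz.
  - exists z. split; [exists 1%Z; apply eq_sym, zpow1|]. intro Ez.
    specialize (Hind (1%Z :: repeat 0%Z (length bs))). simpl in Hind.
    rewrite repeat_length, lincomb_zeros, mulg1, mul1g, Ez in Hind.
    specialize (Hind eq_refl (aq_one HT)). inversion Hind. discriminate.
Qed.

Section DirectFactor.
Variables H K : G -> Prop.
Hypothesis H_normal : normal G H.
Hypothesis K_normal : normal G K.
Hypothesis HK_trivial : forall x, H x -> K x -> x = e.
Hypothesis HK_generate : forall g, exists h k, H h /\ K k /\ g = h ** k.
Hypothesis H_abelian : forall x y, H x -> H y -> x ** y = y ** x.

Lemma factors_commute h k : H h -> K k -> h ** k = k ** h.
Proof.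
  destruct H_normal as ((H1 & HM & HV) & Hconj), K_normal as ((K1 & KM & KV) & Kconj).
  intros Hh Hk. apply comm_trivial, HK_trivial; unfold comm.
  - rewrite <- mulgA, (mulgA (iv k)). auto.
  - rewrite (mulgA _ h k). auto.
Qed.

Lemma factor_center h : H h -> center G h.
Proof.
  intros Hh g. destruct (HK_generate g) as (h' & k & Hh' & Hk & ->).
  rewrite mulgA, (H_abelian Hh Hh'), <- mulgA, (factors_commute Hh Hk), mulgA. reflexivity.
Qed.

Lemma derived_factor g : derived G g -> K g.
Proof.
  destruct K_normal as ((K1 & KM & KV) & _).
  apply gen_subgroup; [split; auto|]. intros c (x & y & _ & ->).
  destruct (HK_generate x) as (h1 & k1 & Hh1 & Hk1 & ->).
  destruct (HK_generate y) as (h2 & k2 & Hh2 & Hk2 & ->).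
  rewrite comm_centerMl, comm_centerMr by (apply factor_center; assumption).
  unfold comm. auto.
Qed.

Local Notation T := (ab_torsion G).

Lemma torsion_factor_trivial h : torsion_free G -> H h -> T h -> h = e.
Proof.
  destruct H_normal as ((H1 & HM & _) & _).
  intros Htf Hh (n & Hn & Hhn). apply (Htf h n Hn), HK_trivial.
  - apply npow_closed; assumption.
  - apply derived_factor, Hhn.
Qed.

Lemma torsion_mul_factors a b : H a -> K b -> T (a ** b) -> T a /\ T b.
Proof.
  destruct H_normal as ((H1 & HM & HV) & _), K_normal as ((K1 & KM & KV) & _).
  pose proof abelian_quotient_derived as HD. pose proof abelian_quotient_torsion as HT.
  intros Ha Hb Hab. pose proof Hab as (n & Hn & Habn).
  assert (Ta : T a).
  { exists n. split; [exact Hn|]. replace (npow G a n) with e; [apply (aq_one HD)|].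
    symmetry. apply HK_trivial; [apply npow_closed; assumption|].
    rewrite <- (mulgK (npow G a n) (npow G b n)). apply KM; [|apply KV, npow_closed; assumption].
    apply derived_factor, (memN_eqmod HD (npow G (a ** b) n));
      [apply (npow_mul_eqmod HD) | exact Habn]. }
  split; [exact Ta|].
  rewrite <- (mulKg a b). apply (aq_mul HT); [apply (aq_inv HT), Ta | exact Hab].
Qed.

Lemma indep_app_factors hb kb :
  Forall H hb -> Forall K kb -> indep T hb -> indep T kb -> indep T (hb ++ kb).
Proof.
  intros Fhb Fkb Ihb Ikb ns Hlen Hrel.
  rewrite <- (firstn_skipn (length hb) ns) in Hrel |- *.
  rewrite length_app in Hlen.
  rewrite lincomb_app in Hrel by (rewrite length_firstn; lia).
  apply torsion_mul_factors in Hrel as [Ta Tb];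
    [| apply lincomb_subgroup; [apply H_normal | exact Fhb]
     | apply lincomb_subgroup; [apply K_normal | exact Fkb]].
  apply Forall_app. split; [apply Ihb | apply Ikb];
    rewrite ?length_firstn, ?length_skipn; auto; lia.
Qed.

Lemma gen_app_factors hl kl g : Forall H hl -> Forall K kl ->
  gen G (fun x => In x (hl ++ kl)) g ->
  exists h k, gen G (fun x => In x hl) h /\ gen G (fun x => In x kl) k /\ g = h ** k.
Proof.
  intros Fhl Fkl.
  pose proof (gen_list_subgroup (proj1 H_normal) Fhl) as genH.
  pose proof (gen_list_subgroup (proj1 K_normal) Fkl) as genK.
  induction 1 as [x Hx| |x y _ (h1 & k1 & Gh1 & Gk1 & ->) _ (h2 & k2 & Gh2 & Gk2 & ->)
                 |x _ (h & k & Gh & Gk & ->)].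
  - apply in_app_or in Hx as [Hx|Hx].
    + exists x, e. rewrite mulg1. auto using gen_in, gen_one.
    + exists e, x. rewrite mul1g. auto using gen_in, gen_one.
  - exists e, e. rewrite mulg1. auto using gen_one.
  - exists (h1 ** h2), (k1 ** k2). split; [|split]; auto using gen_mul.
    rewrite <- !mulgA, (mulgA k1), <- (factors_commute (genH _ Gh2) (genK _ Gk1)), !mulgA.
    reflexivity.
  - exists (iv h), (iv k). split; [|split]; auto using gen_inv.
    rewrite invMg. symmetry. apply factors_commute.
    + apply H_normal, genH, Gh.
    + apply K_normal, genK, Gk.
Qed.

Lemma factors_finitely_generated : finitely_generated G ->
  exists hl kl, Forall H hl /\ Forall K kl /\
    (forall h, H h -> gen G (fun x => In x hl) h) /\
    (forall k, K k -> gen G (fun x => In x kl) k).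
Proof.
  intros [l Hl].
  assert (Hsplit : exists hl kl, Forall H hl /\ Forall K kl /\
            forall x, In x l -> gen G (fun y => In y (hl ++ kl)) x).
  { clear Hl. induction l as [|g l (hl & kl & Fhl & Fkl & Hl)].
    - exists [], []. split; [|split]; auto. intros x [].
    - destruct (HK_generate g) as (h & k & Hh & Hk & ->).
      exists (h :: hl), (k :: kl). split; [|split]; auto.
      intros x [<-|Hx].
      + apply gen_mul; apply gen_in; rewrite in_app_iff; simpl; auto.
      + apply (gen_mono (P := fun y => In y (hl ++ kl))), Hl, Hx.
        intro y. rewrite !in_app_iff. simpl. tauto. }
  destruct Hsplit as (hl & kl & Fhl & Fkl & Hl').
  assert (Hdec : forall g, exists h k,
             gen G (fun x => In x hl) h /\ gen G (fun x => In x kl) k /\ g = h ** k).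
  { intro g. apply gen_app_factors; auto. apply (gen_sub (P := fun x => In x l)); auto. }
  pose proof (gen_list_subgroup (proj1 H_normal) Fhl) as genH.
  pose proof (gen_list_subgroup (proj1 K_normal) Fkl) as genK.
  destruct H_normal as ((H1 & HM & HV) & _), K_normal as ((K1 & KM & KV) & _).
  exists hl, kl. split; [|split; [|split]]; auto.
  - intros h Hh. destruct (Hdec h) as (h' & k' & Gh & Gk & E).
    replace h with h'; [exact Gh|].
    assert (Ek : k' = e) by (apply HK_trivial; [rewrite <- (mulKg h' k'), <- E|]; auto).
    rewrite E, Ek, mulg1. reflexivity.
  - intros k Hk. destruct (Hdec k) as (h' & k' & Gh & Gk & E).
    replace k with k'; [exact Gk|].
    assert (Eh : h' = e).
    { apply HK_trivial; [auto|]. rewrite <- (mulgK h' k'), <- E. auto. }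
    rewrite E, Eh, mul1g. reflexivity.
Qed.

Lemma direct_factor_primitive_center : finitely_generated G -> torsion_free G ->
  (exists h, H h /\ h <> e) -> exists z, center G z /\ ab_primitive G z.
Proof.
  intros Hfg Htf (h0 & Hh0 & Hh0e). pose proof abelian_quotient_torsion as HT.
  destruct (factors_finitely_generated Hfg) as (hl & kl & Fhl & Fkl & Hgen & Kgen).
  destruct (exists_indep_spanning HT isolated_torsion (proj1 H_normal) Fhl)
    as (hb & Fhb & Shb & Ihb).
  destruct (exists_indep_spanning HT isolated_torsion (proj1 K_normal) Fkl)
    as (kb & Fkb & Skb & Ikb).
  assert (Hspan : forall h, H h -> span T hb h).
  { intros h Hh. apply (span_trans Shb), (gen_mono (P := fun x => In x hl)); auto. }
  assert (Kspan : forall k, K k -> span T kb k).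
  { intros k Hk. apply (span_trans Skb), (gen_mono (P := fun x => In x kl)); auto. }
  destruct hb as [|z hb'].
  { contradict Hh0e. apply (torsion_factor_trivial Htf Hh0), (span_nil HT), Hspan, Hh0. }
  exists z. split; [apply factor_center; inversion Fhb; assumption|].
  exists (hb' ++ kb). apply basis_mod_torsionE. split.
  - intro x. destruct (HK_generate x) as (h & k & Hh & Hk & ->).
    change (z :: hb' ++ kb) with ((z :: hb') ++ kb).
    apply gen_mul.
    + apply (span_incl (A := z :: hb')), Hspan, Hh. apply incl_appl, incl_refl.
    + apply (span_incl (A := kb)), Kspan, Hk. apply incl_appr, incl_refl.
  - apply (indep_app_factors (hb := z :: hb')); assumption.
Qed.

End DirectFactor.
End GroupTheory.

Theorem mainTheorem7 (G : Group) :
  finitely_generated G -> torsion_free G -> nilpotent G ->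
  (has_nontrivial_abelian_direct_factor G <->
   exists z : G, center G z /\ ab_primitive G z).
Proof.
  intros Hfg Htf _. split.
  - intros (H & K & HH & HK & Htriv & Hgen & Hab & Hnontriv).
    exact (direct_factor_primitive_center HH HK Htriv Hgen Hab Hfg Htf Hnontriv).
  - intros (z & Hz & Hprim). exact (primitive_center_direct_factor Hz Hprim).
Qed.
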